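(* Let $G$ be a concurrent game structure with a set $F\subseteq S$ of safe states, let $v$ be a valuation, and let $(\overline{G}_v,\overline{F})=\mathrm{TB}(G,v,F)$. Let $\overline{A}$ be the set of almost-sure winning states in $\overline{G}_v$ for $\mathrm{Safe}(\overline{F})$, and $\overline{\pi}_1$ a pure memoryless almost-sure winning strategy from $\overline{A}$ in $\overline{G}_v$. Let $\pi_1$ be a memoryless player-1 strategy in $G$ such that for every $s\in\overline{A}\cap S$, if $\overline{\pi}_1(s)=(s,A,B)$ then $\pi_1(s)\in\mathrm{OptSel}(v,s)$, $\mathrm{supp}(\pi_1(s))=A$ and $\mathrm{CountOpt}(v,s,\pi_1(s))=B$. Let $\pi_2$ be a pure memoryless player-2 strategy. If $\pi_2(s)\in\mathrm{CountOpt}(v,s,\pi_1(s))$ for all $s\in\overline{A}\cap S$, then $\Pr_s^{\pi_1,\pi_2}(\mathrm{Safe}(F))=1$ for all $s\in\overline{A}\cap S$.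
   Context: Concurrent game structure $G=(S,M,\Gamma_1,\Gamma_2,\delta)$: finite states, finite moves, nonempty move sets $\Gamma_i(s)$, $\delta(s,a_1,a_2)\in\mathrm{Distr}(S)$ (simultaneous independent moves), $\mathrm{Dest}(s,a_1,a_2)=\mathrm{supp}\,\delta(s,a_1,a_2)$. A selector at $s$ for player $i$ is a distribution on $\Gamma_i(s)$; memoryless strategies play a fixed selector at each state; pure means point masses. $\mathrm{Safe}(F)$: plays staying in $F$ forever. A valuation is $v:S\to[0,1]$. $\mathrm{Pre}_{\xi_1,\xi_2}(v)(s)=\sum_{a,b}\sum_tv(t)\delta(s,a,b)(t)\xi_1(s)(a)\xi_2(s)(b)$; $\mathrm{Pre}_{\xi_1,b}$ with player 2 playing $b$; $\mathrm{Pre}_{1:\xi_1}(v)(s)=\inf_{\xi_2}\mathrm{Pre}_{\xi_1,\xi_2}(v)(s)$; $\mathrm{Pre}_1(v)(s)=\sup_{\xi_1}\mathrm{Pre}_{1:\xi_1}(v)(s)$. $\mathrm{OptSel}(v,s)=\{\xi_1:\mathrm{Pre}_{1:\xi_1}(v)(s)=\mathrm{Pre}_1(v)(s)\}$; $\mathrm{CountOpt}(v,s,\xi_1)=\{b\in\Gamma_2(s):\mathrm{Pre}_{\xi_1,b}(v)(s)=\mathrm{Pre}_1(v)(s)\}$; $\mathrm{OptSelCount}(v,s)$ = pairs $(A,B)$ such that some $\xi_1\in\mathrm{OptSel}(v,s)$ has support $A$ and $\mathrm{CountOpt}(v,s,\xi_1)=B$. $\mathrm{TB}(G,v,F)=(\overline{G}_v,\overline{F})$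 is the turn-based stochastic game (player $i$ chooses the successor at its states; random states choose uniformly among successors) with player-1 states $S$, player-2 states $(s,A,B)$ for $(A,B)\in\mathrm{OptSelCount}(v,s)$, random states $(s,A,b)$ for such $(A,B)$ and $b\in B$, edges $s\to(s,A,B)$, $(s,A,B)\to(s,A,b)$ for $b\in B$, $(s,A,b)\to t$ for $t\in\bigcup_{a\in A}\mathrm{Dest}(s,a,b)$; $\overline{F}=F\cup\{(s,A,B):s\in F\}\cup\{(s,A,b):s\in F\}$. A state is almost-sure winning for $\mathrm{Safe}(\overline{F})$ if player 1 has a strategy ensuring $\mathrm{Safe}(\overline{F})$ with probability 1 from it against all player-2 strategies; an almost-sure winning strategy from $\overline{A}$ does so from every state of $\overline{A}$. *)

From HB Require Import structures.
From mathcomp Require Import all_boot all_order all_algebra.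
From mathcomp Require Import classical_sets reals.
Set Implicit Arguments. Unset Strict Implicit. Unset Printing Implicit Defensive.
Import Order.TTheory GRing.Theory Num.Theory.
Local Open Scope ring_scope.

Section CGS.
Variable R : realType.

Definition is_distr (T : finType) (d : {ffun T -> R}) : Prop :=
  (forall x, 0 <= d x) /\ \sum_x d x = 1.

Definition supp (T : finType) (d : {ffun T -> R}) : {set T} := [set x | d x != 0].

Variables S M : finType.

Record cgs := CGS {
  Gam1 : S -> {set M};
  Gam2 : S -> {set M};
  delta : S -> M -> M -> {ffun S -> R} }.

Definition cgs_wf (G : cgs) : Prop :=
  (forall s, (0 < #|Gam1 G s|)%N) /\ (forall s, (0 < #|Gam2 G s|)%N) /\
  (forall s a b, a \in Gam1 G s -> b \in Gam2 G s -> is_distr (delta G s a b)).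

Definition Dest (G : cgs) s a b : {set S} := supp (delta G s a b).

Definition sel1 (G : cgs) s (xi : {ffun M -> R}) : Prop :=
  is_distr xi /\ forall a, a \notin Gam1 G s -> xi a = 0.
Definition sel2 (G : cgs) s (xi : {ffun M -> R}) : Prop :=
  is_distr xi /\ forall b, b \notin Gam2 G s -> xi b = 0.

Definition valuation (v : S -> R) : Prop := forall s, 0 <= v s <= 1.

Definition Pre (G : cgs) (v : S -> R) s (xi1 xi2 : {ffun M -> R}) : R :=
  \sum_a \sum_b \sum_t v t * delta G s a b t * xi1 a * xi2 b.

Definition Pre_b (G : cgs) (v : S -> R) s (xi1 : {ffun M -> R}) (b : M) : R :=
  \sum_a \sum_t v t * delta G s a b t * xi1 a.

Definition Pre1_sel (G : cgs) (v : S -> R) s (xi1 : {ffun M -> R}) : R :=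
  inf [set Pre G v s xi1 xi2 | xi2 in [set xi2 | sel2 G s xi2]]%classic.

Definition Pre1 (G : cgs) (v : S -> R) s : R :=
  sup [set Pre1_sel G v s xi1 | xi1 in [set xi1 | sel1 G s xi1]]%classic.

Definition OptSel (G : cgs) (v : S -> R) s (xi1 : {ffun M -> R}) : Prop :=
  sel1 G s xi1 /\ Pre1_sel G v s xi1 = Pre1 G v s.

Definition CountOpt (G : cgs) (v : S -> R) s (xi1 : {ffun M -> R}) : {set M} :=
  [set b in Gam2 G s | Pre_b G v s xi1 b == Pre1 G v s].

Definition OptSelCount (G : cgs) (v : S -> R) s (A B : {set M}) : Prop :=
  exists xi1, OptSel G v s xi1 /\ supp xi1 = A /\ CountOpt G v s xi1 = B.

(** Markov chain induced by a memoryless player-1 strategy pi1 and a pure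
    memoryless player-2 strategy pi2; safeN n s = probability that the
    first n+1 states of the play from s all lie in F. *)
Definition mc_step (G : cgs) (pi1 : S -> {ffun M -> R}) (pi2 : S -> M) s t : R :=
  \sum_a pi1 s a * delta G s a (pi2 s) t.

Fixpoint safeN (G : cgs) pi1 pi2 (F : {set S}) (n : nat) (s : S) : R :=
  match n with
  | 0 => (s \in F)%:R
  | n'.+1 => (s \in F)%:R * \sum_t mc_step G pi1 pi2 s t * safeN G pi1 pi2 F n' t
  end.

(** Pr_s^{pi1,pi2}(Safe F) = 1 (probability of the decreasing intersection of
    the events "first n steps in F"). *)
Definition prob_safe_one (G : cgs) pi1 pi2 (F : {set S}) (s : S) : Prop :=
  forall n, safeN G pi1 pi2 F n s = 1.

(* states: inl (inl s)        = player-1 state s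
           inl (inr (s,A,B))  = player-2 state (s,A,B)
           inr (s,A,b)        = random state (s,A,b)                  *)
Definition tbstate : finType :=
  ((S + (S * {set M} * {set M})) + (S * {set M} * M))%type.

Definition TB1 (s : S) : tbstate := inl (inl s).
Definition TB2 (s : S) (A B : {set M}) : tbstate := inl (inr (s, A, B)).
Definition TBR (s : S) (A : {set M}) (b : M) : tbstate := inr (s, A, b).

Definition tb_base (x : tbstate) : S :=
  match x with
  | inl (inl s) => s
  | inl (inr (s, _, _)) => s
  | inr (s, _, _) => s
  end.

Definition tbDest (G : cgs) s (A : {set M}) b : {set S} :=
  \bigcup_(a in A) Dest G s a b.

(** The states actually present in the turn-based game. *)
Definition tb_valid (G : cgs) v (x : tbstate) : Prop :=
  match x with
  | inl (inl s) => True
  | inl (inr (s, A, B)) => OptSelCount G v s A B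
  | inr (s, A, b) => exists B, OptSelCount G v s A B /\ b \in B
  end.

Definition tb_edge (G : cgs) v (x y : tbstate) : Prop :=
  match x, y with
  | inl (inl s), inl (inr (s', A, B)) => s' = s /\ OptSelCount G v s A B
  | inl (inr (s, A, B)), inr (s', A', b) =>
      OptSelCount G v s A B /\ s' = s /\ A' = A /\ b \in B
  | inr (s, A, b), inl (inl t) =>
      (exists B, OptSelCount G v s A B /\ b \in B) /\ t \in tbDest G s A b
  | _, _ => False
  end.

Definition is_p1 (x : tbstate) : bool :=
  if x is inl (inl _) then true else false.
Definition is_p2 (x : tbstate) : bool :=
  if x is inl (inr _) then true else false.

Definition Fbar (F : {set S}) : {set tbstate} := [set x | tb_base x \in F].

(** General (history-dependent, randomized) strategies in the turn-based game:
    given the history prefix and the current state, a distribution on states. *)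
Definition tbstrat := seq tbstate -> tbstate -> {ffun tbstate -> R}.

Definition legal_strat (G : cgs) v (owner : tbstate -> bool) (sg : tbstrat) : Prop :=
  forall h x, tb_valid G v x -> owner x ->
    is_distr (sg h x) /\ forall y, sg h x y != 0 -> tb_edge G v x y.

Definition tb_step (G : cgs) (s1 s2 : tbstrat) h (x y : tbstate) : R :=
  match x with
  | inl (inl _) => s1 h x y
  | inl (inr _) => s2 h x y
  | inr (s, A, b) =>
      match y with
      | inl (inl t) => if t \in tbDest G s A b then #|tbDest G s A b|%:R^-1 else 0
      | _ => 0
      end
  end.

(** Probability that the first n+1 states of the play (continuing history h
    from current state x) lie in Fbar. *)
Fixpoint tb_safeN (G : cgs) (s1 s2 : tbstrat) (Fb : {set tbstate}) (n : nat)
    (h : seq tbstate) (x : tbstate) : R :=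
  match n with
  | 0 => (x \in Fb)%:R
  | n'.+1 => (x \in Fb)%:R *
      \sum_y tb_step G s1 s2 h x y * tb_safeN G s1 s2 Fb n' (rcons h x) y
  end.

Definition tb_as_wins (G : cgs) v (F : {set S}) (s1 : tbstrat) (x : tbstate) : Prop :=
  forall s2, legal_strat G v is_p2 s2 ->
    forall n, tb_safeN G s1 s2 (Fbar F) n [::] x = 1.

Definition tb_as_winning_state (G : cgs) v F (x : tbstate) : Prop :=
  tb_valid G v x /\
  exists s1, legal_strat G v is_p1 s1 /\ tb_as_wins G v F s1 x.

Definition pure_ml (f : tbstate -> tbstate) : tbstrat :=
  fun _ x => [ffun y => (y == f x)%:R].

Definition legal_pure_ml1 (G : cgs) v (f : tbstate -> tbstate) : Prop :=
  forall s, tb_edge G v (TB1 s) (f (TB1 s)).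

End CGS.
Arguments TB1 {S M} s.
Arguments pure_ml {R S M} f.
Arguments tb_base {S M} x.

(* Player 1's turn-based strategy picks at s a pair (A, B); pi1 realises it by
   a selector with support A and pi2 answers inside B, so every successor t of
   s in the Markov chain of (pi1, pi2) is a successor of the random state
   (s, A, pi2 s).  Player 2 may steer the turn-based play to that state, from
   which the play moves uniformly to its successors; as the play from s is safe
   with probability 1, so is the play from each successor, and t is again
   almost-sure winning.  Thus the almost-sure winning states of S form a subset
   of F closed under the Markov chain. *)
From mathcomp Require Import all_boot all_order all_algebra.
From mathcomp Require Import classical_sets reals.
Set Implicit Arguments. Unset Strict Implicit. Unset Printing Implicit Defensive.
Import Order.TTheory GRing.Theory Num.Theory.
Local Open Scope ring_scope.

Lemma uniform_mean_eq1 (R : numFieldType) (T : finType) (D : {set T}) (g : T -> R) :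
  (forall i, i \in D -> g i <= 1) -> \sum_(i in D) #|D|%:R^-1 * g i = 1 ->
  forall i, i \in D -> g i = 1.
Proof.
move=> g_le1 mean1 i Di.
have cD_neq0 : #|D|%:R^-1 != 0 :> R.
  by rewrite invr_eq0 pnatr_eq0 -lt0n; apply/card_gt0P; exists i.
have sum_c : \sum_(j in D) #|D|%:R^-1 = 1 :> R.
  by rewrite sumr_const -(mulr_natr #|D|%:R^-1) mulVf // -invr_eq0.
have nonneg j : j \in D -> 0 <= #|D|%:R^-1 * (1 - g j) :> R.
  by move=> Dj; rewrite mulr_ge0 ?invr_ge0 ?ler0n ?subr_ge0 ?g_le1.
have : \sum_(j in D) #|D|%:R^-1 * (1 - g j) = 0.
  by under eq_bigr do rewrite mulrBr mulr1; rewrite sumrB sum_c mean1 subrr.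
move=> /(psumr_eq0P nonneg)/(_ i Di)/eqP.
by rewrite mulf_eq0 (negbTE cD_neq0) subr_eq0 => /eqP.
Qed.

Section Dirac.
Variable R : realType.

Definition dirac (T : finType) (z : T) : {ffun T -> R} := [ffun y => (y == z)%:R].

Lemma dirac_distr (T : finType) (z : T) : is_distr (dirac z).
Proof.
split=> [y|]; first by rewrite ffunE ler0n.
rewrite (bigD1 z) //= ffunE eqxx big1 ?addr0 // => y /negbTE y_neq.
by rewrite ffunE y_neq.
Qed.

Lemma sum_dirac_mul (T : finType) (z : T) (g : T -> R) :
  \sum_y dirac z y * g y = g z.
Proof.
rewrite (bigD1 z) //= ffunE eqxx mul1r big1 ?addr0 // => y /negbTE y_neq.
by rewrite ffunE y_neq mul0r.
Qed.

End Dirac.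
Arguments dirac {R T} z.

Section OneStepValue.
Variables (R : realType) (S M : finType) (G : cgs R S M) (v : S -> R).

Lemma Pre_mix s xi1 xi2 : Pre G v s xi1 xi2 = \sum_b xi2 b * Pre_b G v s xi1 b.
Proof.
rewrite /Pre /Pre_b exchange_big /=; apply: eq_bigr => b _.
rewrite big_distrr /=; apply: eq_bigr => a _.
by rewrite big_distrr /=; apply: eq_bigr => t _; rewrite mulrC.
Qed.

Lemma sel2_dirac s b : b \in Gam2 G s -> sel2 G s (dirac b).
Proof.
move=> bG; split=> [|c cG]; first exact: dirac_distr.
by rewrite ffunE; case: eqP cG => // ->; rewrite bG.
Qed.

(* Against a fixed selector the infimum over player 2's selectors is attained
   by a pure move, since [Pre] is a convex combination of the [Pre_b]. *)
Lemma Pre1_sel_pure s xi1 : (0 < #|Gam2 G s|)%N ->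
  exists2 b, b \in Gam2 G s & Pre1_sel G v s xi1 = Pre_b G v s xi1 b.
Proof.
move=> /card_gt0P[b0 b0G].
case: (@arg_minP _ _ M b0 (mem (Gam2 G s)) (Pre_b G v s xi1) b0G) => b bG b_min.
exists b => //; rewrite /Pre1_sel; set E := [set _ | _ in _]%classic.
have lbE : lbound E (Pre_b G v s xi1 b).
  move=> _ [xi2 [[xi2_ge0 xi2_sum] xi2_out] <-]; rewrite Pre_mix.
  rewrite -[leLHS]mul1r -xi2_sum big_distrl /=; apply: ler_sum => c _.
  case: (boolP (c \in Gam2 G s)) => cG; first exact/ler_wpM2l/b_min.
  by rewrite xi2_out // !mul0r.
have Eb : E (Pre_b G v s xi1 b).
  by exists (dirac b); [exact: sel2_dirac | rewrite Pre_mix sum_dirac_mul].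
apply/le_anti/andP; split; first by apply: (ge_inf _ Eb); exists (Pre_b G v s xi1 b).
by apply: lb_le_inf => //; exists (Pre_b G v s xi1 b).
Qed.

Lemma CountOpt_nonempty s xi1 : (0 < #|Gam2 G s|)%N -> OptSel G v s xi1 ->
  exists b, b \in CountOpt G v s xi1.
Proof.
move=> G2s [_ opt]; have [b bG Pre_b_eq] := Pre1_sel_pure xi1 G2s.
by exists b; rewrite inE bG -opt Pre_b_eq eqxx.
Qed.

End OneStepValue.

Section TurnBasedGame.
Variables (R : realType) (S M : finType) (G : cgs R S M) (v : S -> R).
Local Notation tbstate := (tbstate S M).
Local Notation tbstrat := (tbstrat R S M).
Local Notation legal1 := (legal_strat G v (@is_p1 S M)).
Local Notation legal2 := (legal_strat G v (@is_p2 S M)).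

Lemma tb_edge_valid x y : tb_edge G v x y -> tb_valid G v y.
Proof.
case: x => [[s|[[s A] B]]|[[s A] b]]; case: y => [[t|[[t A'] B']]|[[t A'] b']] //=.
- by case=> ->.
- by case=> OSC [-> [-> bB]]; exists B.
Qed.

Lemma legal_pure_ml f : legal_pure_ml1 G v f -> legal1 (pure_ml f).
Proof.
move=> Lf h [[s|//]|//] _ _; split=> [|y]; first exact: dirac_distr.
by rewrite ffunE; case: (eqVneq y (f (TB1 s))) => [-> _|_]; [exact: Lf | rewrite eqxx].
Qed.

Lemma legal_pure_ml1_TB2 f s : legal_pure_ml1 G v f ->
  exists A B, f (TB1 s) = TB2 s A B /\ OptSelCount G v s A B.
Proof.
move=> /(_ s); case: (f (TB1 s)) => [[//|[[s' A] B]]|//] /= [-> OSC].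
by exists A, B.
Qed.

Lemma exists_legal2 : (forall s, 0 < #|Gam2 G s|)%N -> exists s2 : tbstrat, legal2 s2.
Proof.
move=> G2_gt0.
pose s2 : tbstrat := fun _ x => if x is inl (inr (s, A, B)) then
  if [pick b in B] is Some b then dirac (TBR s A b) else 0 else 0.
exists s2 => h [[//|[[s A] B]]|//] /= OSC _; have [xi1 [opt [_ countB]]] := OSC.
have [b0] := CountOpt_nonempty (G2_gt0 s) opt; rewrite countB.
case: pickP => [b bB _|/(_ b0) -> //].
split=> [|y]; first exact: dirac_distr.
by rewrite ffunE; case: (eqVneq y (TBR s A b)) => [-> _|_]; [by do !split | rewrite eqxx].
Qed.

Lemma sum_tb_step_random (s1 s2 : tbstrat) h s A b (g : tbstate -> R) :
  \sum_y tb_step G s1 s2 h (TBR s A b) y * g y =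
  \sum_(t in tbDest G s A b) #|tbDest G s A b|%:R^-1 * g (TB1 t).
Proof.
rewrite !big_sumType /= [X in _ + X + _]big1 ?[X in _ + X]big1 ?addr0 => [|y _|y _];
  rewrite ?mul0r //.
by rewrite [RHS]big_mkcond; apply: eq_bigr => t _ /=; case: ifP; rewrite ?mul0r.
Qed.

Lemma tb_safeN_random (s1 s2 : tbstrat) Fb n h s A b :
  tb_safeN G s1 s2 Fb n.+1 h (TBR s A b) = (TBR s A b \in Fb)%:R *
  \sum_(t in tbDest G s A b)
     #|tbDest G s A b|%:R^-1 * tb_safeN G s1 s2 Fb n (rcons h (TBR s A b)) (TB1 t).
Proof. exact: congr1 _ (sum_tb_step_random _ _ _ _ _ _ _). Qed.

Lemma tb_safeN_det (s1 s2 : tbstrat) Fb n h x y0 :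
  (forall y, tb_step G s1 s2 h x y = (y == y0)%:R) ->
  tb_safeN G s1 s2 Fb n.+1 h x = (x \in Fb)%:R * tb_safeN G s1 s2 Fb n (rcons h x) y0.
Proof.
move=> det; rewrite /= -[in RHS](sum_dirac_mul y0); congr (_ * _).
by apply: eq_bigr => y _; rewrite det ffunE.
Qed.

Section Play.
Variables s1 s2 : tbstrat.
Hypotheses (legal_s1 : legal1 s1) (legal_s2 : legal2 s2).

Lemma tb_step_ge0 h x y : tb_valid G v x -> 0 <= tb_step G s1 s2 h x y.
Proof.
case: x => [[s|[[s A] B]]|[[s A] b]] Vx.
- by have [[ge0 _] _] := legal_s1 h Vx erefl; exact: ge0.
- by have [[ge0 _] _] := legal_s2 h Vx erefl; exact: ge0.
by case: y => [[t|//]|//] /=; case: ifP => // _; rewrite invr_ge0 ler0n.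
Qed.

Lemma tb_step_valid h x y : tb_valid G v x ->
  tb_step G s1 s2 h x y != 0 -> tb_valid G v y.
Proof.
case: x => [[s|[[s A] B]]|[[s A] b]] Vx.
- by have [_ /(_ y) edge] := legal_s1 h Vx erefl => /edge/tb_edge_valid.
- by have [_ /(_ y) edge] := legal_s2 h Vx erefl => /edge/tb_edge_valid.
by case: y => [[t|[[t A'] B']]|[[t A'] b']]; rewrite //= eqxx.
Qed.

Lemma sum_tb_step_le1 h x : tb_valid G v x -> \sum_y tb_step G s1 s2 h x y <= 1.
Proof.
case: x => [[s|[[s A] B]]|[[s A] b]] Vx.
- by have [[_ ->] _] := legal_s1 h Vx erefl.
- by have [[_ ->] _] := legal_s2 h Vx erefl.
under eq_bigr do rewrite -[tb_step _ _ _ _ _ _]mulr1.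
rewrite sum_tb_step_random; under eq_bigr do rewrite mulr1.
rewrite sumr_const; have [->|D_gt0] := posnP #|tbDest G s A b|; first by rewrite mulr0n ler01.
by rewrite -(mulr_natr #|tbDest G s A b|%:R^-1) mulVf // pnatr_eq0 -lt0n.
Qed.

Lemma tb_safeN_bounds Fb n h x : tb_valid G v x ->
  0 <= tb_safeN G s1 s2 Fb n h x <= 1.
Proof.
elim: n h x => [|n IH] h x Vx /=; first by case: (x \in Fb); rewrite ?lexx ?ler01.
have term_bounds y : 0 <= tb_step G s1 s2 h x y * tb_safeN G s1 s2 Fb n (rcons h x) y
                       <= tb_step G s1 s2 h x y.
  have [->|step_neq0] := eqVneq (tb_step G s1 s2 h x y) 0; first by rewrite mul0r lexx.
  have /andP[safe_ge0 safe_le1] := IH (rcons h x) y (tb_step_valid Vx step_neq0).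
  have step_ge0 := tb_step_ge0 h y Vx.
  by rewrite mulr_ge0 //= -[leRHS]mulr1 ler_wpM2l.
have sum_ge0 : 0 <= \sum_y tb_step G s1 s2 h x y * tb_safeN G s1 s2 Fb n (rcons h x) y.
  by apply: sumr_ge0 => y _; have /andP[] := term_bounds y.
have sum_le1 : \sum_y tb_step G s1 s2 h x y * tb_safeN G s1 s2 Fb n (rcons h x) y <= 1.
  apply: le_trans (sum_tb_step_le1 h Vx); apply: ler_sum => y _.
  by have /andP[] := term_bounds y.
by case: (x \in Fb); rewrite ?mul1r ?mul0r ?lexx ?ler01 ?sum_ge0.
Qed.

End Play.

Definition force_move (x0 z : tbstate) (s2 : tbstrat) : tbstrat :=
  fun h x => if x == x0 then dirac z else s2 h x.

Definition prefix_strat (p : seq tbstate) (s2 s2f : tbstrat) : tbstrat :=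
  fun h x => if take (size p) h == p then s2 (drop (size p) h) x else s2f h x.

Lemma legal_force_move x0 z s2 : tb_edge G v x0 z -> legal2 s2 ->
  legal2 (force_move x0 z s2).
Proof.
move=> edge L2 h x Vx P2; rewrite /force_move; case: eqP => [->|_]; last exact: L2.
split=> [|y]; first exact: dirac_distr.
by rewrite ffunE; case: (eqVneq y z) => [-> _|_]; [exact: edge | rewrite eqxx].
Qed.

Lemma legal_prefix_strat p s2 s2f :
  legal2 s2 -> legal2 s2f -> legal2 (prefix_strat p s2 s2f).
Proof.
by move=> L2 L2f h x; rewrite /prefix_strat; case: ifP => _; [exact: L2 | exact: L2f].
Qed.

Lemma tb_safeN_prefix_strat (s1 : tbstrat) p s2 s2f Fb n h x :
  (forall h h', s1 h = s1 h') ->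
  tb_safeN G s1 (prefix_strat p s2 s2f) Fb n (p ++ h) x = tb_safeN G s1 s2 Fb n h x.
Proof.
move=> s1_ml; elim: n h x => [|n IH] h x //=.
congr (_ * _); apply: eq_bigr => y _; rewrite rcons_cat IH; congr (_ * _).
case: x => [[s|[[s A] B]]|[[s A] b]] //=; first by rewrite (s1_ml (p ++ h) h).
by rewrite /prefix_strat take_size_cat // eqxx drop_size_cat.
Qed.

Variable F : {set S}.

Lemma tb_as_wins_base s1 s2 x : legal2 s2 -> tb_as_wins G v F s1 x -> tb_base x \in F.
Proof.
move=> L2 /(_ s2 L2 0%N) /=; rewrite inE.
by case: (_ \in F) => //= /eqP; rewrite eq_sym oner_eq0.
Qed.

Lemma tb_as_wins_succ f s A B b t : legal_pure_ml1 G v f ->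
  tb_as_wins G v F (pure_ml f) (TB1 s) -> f (TB1 s) = TB2 s A B ->
  b \in B -> t \in tbDest G s A b -> tb_as_wins G v F (pure_ml f) (TB1 t).
Proof.
move=> Lf win_s fs bB tD s2 L2 n.
have [_ OSC] : s = s /\ OptSelCount G v s A B by have := Lf s; rewrite fs.
set p := [:: TB1 s; TB2 s A B; TBR s A b].
set s2' := prefix_strat p s2 (force_move (TB2 s A B) (TBR s A b) s2).
have L2' : legal2 s2' by apply: legal_prefix_strat => //; apply: legal_force_move.
have sF : s \in F := tb_as_wins_base L2' win_s.
have step_s y : tb_step G (pure_ml f) s2' [::] (TB1 s) y = (y == TB2 s A B)%:R.
  by rewrite /= ffunE fs.
have step_sAB y : tb_step G (pure_ml f) s2' [:: TB1 s] (TB2 s A B) y = (y == TBR s A b)%:R.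
  by rewrite /= /s2' /prefix_strat /force_move /p /= eqseq_cons andbF eqxx ffunE.
have W := win_s s2' L2' n.+3.
rewrite (tb_safeN_det _ _ step_s) (tb_safeN_det _ _ step_sAB) tb_safeN_random in W.
rewrite !inE /= sF !mul1r in W.
have safe_le1 t' : tb_safeN G (pure_ml f) s2' (Fbar M F) n p (TB1 t') <= 1.
  have valid_t' : tb_valid G v (TB1 t') by [].
  by have /andP[] := tb_safeN_bounds (legal_pure_ml Lf) L2' (Fbar M F) n p valid_t'.
have <- : tb_safeN G (pure_ml f) s2' (Fbar M F) n p (TB1 t) =
          tb_safeN G (pure_ml f) s2 (Fbar M F) n [::] (TB1 t).
  exact: (tb_safeN_prefix_strat p _ _ _ n [::]).
exact: (uniform_mean_eq1 (fun t' _ => safe_le1 t') W tD).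
Qed.

End TurnBasedGame.

Section MarkovChain.
Variables (R : realType) (S M : finType) (G : cgs R S M).
Variables (pi1 : S -> {ffun M -> R}) (pi2 : S -> M).

Lemma sum_mc_step s : cgs_wf G -> sel1 G s (pi1 s) -> pi2 s \in Gam2 G s ->
  \sum_t mc_step G pi1 pi2 s t = 1.
Proof.
move=> [_ [_ delta_distr]] [[_ pi1_sum] pi1_out] pi2G.
rewrite /mc_step exchange_big /= -[RHS]pi1_sum; apply: eq_bigr => a _.
rewrite -big_distrr /=; case: (boolP (a \in Gam1 G s)) => aG.
  by have [_ ->] := delta_distr s a (pi2 s) aG pi2G; rewrite mulr1.
by rewrite pi1_out // mul0r.
Qed.

Lemma mc_step_tbDest s t : mc_step G pi1 pi2 s t != 0 ->
  t \in tbDest G s (supp (pi1 s)) (pi2 s).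
Proof.
apply: contraR => tD; rewrite /mc_step big1 // => a _.
have [->|pi1_neq0] := eqVneq (pi1 s a) 0; first by rewrite mul0r.
have : t \notin Dest G s a (pi2 s).
  by apply: contra tD => tDa; apply/bigcupP; exists a; rewrite // inE.
by rewrite /Dest /supp inE negbK => /eqP ->; rewrite mulr0.
Qed.

Lemma prob_safe_one_closed (F : {set S}) (P : S -> Prop) :
  (forall s, P s -> s \in F) ->
  (forall s t, P s -> mc_step G pi1 pi2 s t != 0 -> P t) ->
  (forall s, P s -> \sum_t mc_step G pi1 pi2 s t = 1) ->
  forall s, P s -> prob_safe_one G pi1 pi2 F s.
Proof.
move=> P_F P_closed P_sum s Ps n; elim: n s Ps => [|n IH] s Ps /=; first by rewrite P_F.
rewrite P_F // mul1r -[RHS](P_sum s Ps); apply: eq_bigr => t _.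
have [->|step_neq0] := eqVneq (mc_step G pi1 pi2 s t) 0; first by rewrite !mul0r.
by rewrite IH ?mulr1 //; exact: P_closed step_neq0.
Qed.

End MarkovChain.

Unset Implicit Arguments.
Theorem lemma12 (R : realType) (S M : finType) (G : cgs R S M)
    (F : {set S}) (v : S -> R)
    (Abar : tbstate S M -> Prop) (pi1bar : tbstate S M -> tbstate S M)
    (pi1 : S -> {ffun M -> R}) (pi2 : S -> M) :
  cgs_wf G -> valuation v ->
  (forall x, Abar x <-> tb_as_winning_state G v F x) ->
  legal_pure_ml1 G v pi1bar ->
  (forall x, Abar x -> tb_as_wins G v F (pure_ml pi1bar) x) ->
  (forall s, sel1 G s (pi1 s)) ->
  (forall s, Abar (TB1 s) -> forall A B, pi1bar (TB1 s) = TB2 s A B ->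
     OptSel G v s (pi1 s) /\ supp (pi1 s) = A /\ CountOpt G v s (pi1 s) = B) ->
  (forall s, pi2 s \in Gam2 G s) ->
  (forall s, Abar (TB1 s) -> pi2 s \in CountOpt G v s (pi1 s)) ->
  forall s, Abar (TB1 s) -> prob_safe_one G pi1 pi2 F s.
Proof.
move=> wf _ Abar_win L1 win sel_pi1 opt_pi1 pi2G pi2_opt.
apply: (@prob_safe_one_closed _ _ _ G pi1 pi2 F (fun s => Abar (TB1 s))).
- move=> s As; have [s2 L2] := exists_legal2 v wf.2.1.
  exact: tb_as_wins_base L2 (win _ As).
- move=> s t As step_neq0.
  have [A [B [fs _]]] := legal_pure_ml1_TB2 s L1.
  have [_ [suppA countB]] := opt_pi1 s As A B fs.
  apply/Abar_win; split=> //; exists (pure_ml pi1bar); split; first exact: legal_pure_ml.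
  apply: (tb_as_wins_succ L1 (win _ As) fs (b := pi2 s)); first by rewrite -countB pi2_opt.
  by rewrite -suppA; exact: mc_step_tbDest.
- by move=> s _; exact: sum_mc_step wf (sel_pi1 s) (pi2G s).
Qed.
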